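(* Let $(X,d)$ be a locally compact, geodesically complete CAT(0)-space connected at infinity, and let $d'$ be a metric on $X$ such that $(X,d')$ is a locally compact geodesically complete CAT(0)-space and $d(x,y)\le1\iff d'(x,y)\le1$ for all $x,y\in X$. Let $\{x_z\}_{z\in\mathbb Z}$ and $\{y_z\}_{z\in\mathbb Z}$ be $r$-sequences in $(X,d)$. Then they are parallel-equivalent with respect to $d$ if and only if they are parallel-equivalent with respect to $d'$.
   Context: With the normalization $r=1$, an $r$-sequence in a metric space $(X,D)$ is a sequence $\{x_z\}_{z\in\mathbb Z}$ with $D(x_{z_1},x_{z_2})=|z_1-z_2|$ for all $z_1,z_2\in\mathbb Z$. Two $r$-sequences are parallel-equivalent (with respect to $D$) if the Hausdorff distance (for $D$) between the sets $\{x_z\}$ and $\{y_z\}$ is finite. Geodesically complete: geodesic and every geodesic segment lies in a complete geodesic; connected at infinity: complement of every metric ball path connected. *)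

From Stdlib Require Import Reals Lra ZArith List.
Open Scope R_scope.

Section MetricDefs.
Context {X : Type}.

Definition is_metric (D : X -> X -> R) : Prop :=
  (forall x y, 0 <= D x y) /\
  (forall x y, D x y = 0 <-> x = y) /\
  (forall x y, D x y = D y x) /\
  (forall x y z, D x z <= D x y + D y z).

Definition open_set (D : X -> X -> R) (U : X -> Prop) : Prop :=
  forall x, U x -> exists e, 0 < e /\ forall y, D x y < e -> U y.

Definition compact_set (D : X -> X -> R) (K : X -> Prop) : Prop :=
  forall (I : Type) (U : I -> X -> Prop),
    (forall i, open_set D (U i)) ->
    (forall x, K x -> exists i, U i x) ->
    exists l : list I, forall x, K x -> exists i, In i l /\ U i x.

Definition locally_compact (D : X -> X -> R) : Prop :=
  forall x, exists K, compact_set D K /\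
    exists U, open_set D U /\ U x /\ forall y, U y -> K y.

Definition geodesic_segment (D : X -> X -> R) (g : R -> X) (L : R) (x y : X) : Prop :=
  0 <= L /\ g 0 = x /\ g L = y /\
  forall s t, 0 <= s <= L -> 0 <= t <= L -> D (g s) (g t) = Rabs (s - t).

Definition geodesic_space (D : X -> X -> R) : Prop :=
  forall x y, exists g, geodesic_segment D g (D x y) x y.

Definition geodesic_line (D : X -> X -> R) (h : R -> X) : Prop :=
  forall s t, D (h s) (h t) = Rabs (s - t).

Definition geodesically_complete (D : X -> X -> R) : Prop :=
  geodesic_space D /\
  forall g L x y, geodesic_segment D g L x y ->
    exists h, geodesic_line D h /\ forall t, 0 <= t <= L -> h t = g t.

Definition eucl (a b : R * R) : R :=
  sqrt ((fst a - fst b)^2 + (snd a - snd b)^2).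

Definition interp (a b : R * R) (u : R) : R * R :=
  (fst a + u * (fst b - fst a), snd a + u * (snd b - snd a)).

Definition cmp_pt (a b : R * R) (L t : R) : R * R :=
  if Req_EM_T L 0 then a else interp a b (t / L).

(* CAT(0): geodesic, and every geodesic triangle satisfies the CAT(0)
   inequality: distances between points on its sides are at most the
   distances between the comparison points in a Euclidean comparison
   triangle. *)
Definition CAT0 (D : X -> X -> R) : Prop :=
  geodesic_space D /\
  forall (x1 x2 x3 : X) (g12 g23 g31 : R -> X) (a1 a2 a3 : R * R),
    geodesic_segment D g12 (D x1 x2) x1 x2 ->
    geodesic_segment D g23 (D x2 x3) x2 x3 ->
    geodesic_segment D g31 (D x3 x1) x3 x1 ->
    eucl a1 a2 = D x1 x2 -> eucl a2 a3 = D x2 x3 -> eucl a3 a1 = D x3 x1 ->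
    let sides : list ((R -> X) * R * (R * R) * (R * R)) :=
      (g12, D x1 x2, a1, a2) :: (g23, D x2 x3, a2, a3) ::
      (g31, D x3 x1, a3, a1) :: nil in
    forall gp Lp ap bp gq Lq aq bq s t,
      In (gp, Lp, ap, bp) sides -> In (gq, Lq, aq, bq) sides ->
      0 <= s <= Lp -> 0 <= t <= Lq ->
      D (gp s) (gq t) <= eucl (cmp_pt ap bp Lp s) (cmp_pt aq bq Lq t).

Definition path_connected (D : X -> X -> R) (A : X -> Prop) : Prop :=
  forall x y, A x -> A y -> exists p : R -> X,
    p 0 = x /\ p 1 = y /\ (forall t, 0 <= t <= 1 -> A (p t)) /\
    (forall t, 0 <= t <= 1 -> forall e, 0 < e -> exists del, 0 < del /\
       forall s, 0 <= s <= 1 -> Rabs (s - t) < del -> D (p s) (p t) < e).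

Definition connected_at_infinity (D : X -> X -> R) : Prop :=
  forall (x : X) (r : R), path_connected D (fun y => ~ D x y < r).

(* r-sequence with r = 1 *)
Definition r_sequence (D : X -> X -> R) (x : Z -> X) : Prop :=
  forall z1 z2 : Z, D (x z1) (x z2) = Rabs (IZR (z1 - z2)).

(* finite Hausdorff distance between the sets {x_z} and {y_z} *)
Definition parallel_equivalent (D : X -> X -> R) (x y : Z -> X) : Prop :=
  exists C : R,
    (forall z, exists w, D (x z) (y w) <= C) /\
    (forall w, exists z, D (x z) (y w) <= C).

End MetricDefs.

(* Balls of radius 1 determine the metrics up to an additive constant: cutting a
   d-geodesic into pieces of d-length at most 1, each of d'-length at most 1, gives
   d' <= d + 1, and symmetrically d <= d' + 1.  Hence a finite d-Hausdorff distance
   between the two sequences is also finite for d', and conversely. *)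
From Stdlib Require Import Reals ZArith Lra Lia.
Open Scope R_scope.

Section GeodesicSpace.

Variables (X : Type) (d : X -> X -> R).
Hypothesis geod : geodesic_space d.

Lemma geodesic_dist_ge0 (x y : X) : 0 <= d x y.
Proof. destruct (geod x y) as [g [L_ge0 _]]. exact L_ge0. Qed.

Lemma geodesic_point_at (x y : X) (t : R) :
  0 <= t <= d x y -> exists m, d x m = t /\ d m y = d x y - t.
Proof.
  intros Ht.
  destruct (geod x y) as [g [_ [g0 [gL g_iso]]]].
  exists (g t); split.
  - rewrite <- g0, g_iso by lra. rewrite Rabs_left1; lra.
  - rewrite <- gL at 1. rewrite g_iso by lra. rewrite Rabs_left1; lra.
Qed.

Variable d' : X -> X -> R.
Hypothesis tri' : forall x y z, d' x z <= d' x y + d' y z.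
Hypothesis unit_ball_incl : forall x y, d x y <= 1 -> d' x y <= 1.

Lemma unit_ball_incl_INR (n : nat) (x y : X) :
  d x y <= INR n + 1 -> d' x y <= INR n + 1.
Proof.
  revert x y; induction n as [|n IHn]; intros x y Hxy.
  - simpl in *; rewrite Rplus_0_l in *; exact (unit_ball_incl x y Hxy).
  - rewrite S_INR in *.
    destruct (Rle_dec (d x y) 1) as [Hle | Hgt].
    + pose proof (pos_INR n). pose proof (unit_ball_incl x y Hle). lra.
    + destruct (geodesic_point_at x y 1) as [m [dxm dmy]]; [lra |].
      assert (d'xm : d' x m <= 1) by (apply unit_ball_incl; lra).
      assert (d'my : d' m y <= INR n + 1) by (apply IHn; lra).
      pose proof (tri' x m y). lra.
Qed.

Lemma dist_le_add1 (x y : X) : d' x y <= d x y + 1.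
Proof.
  pose proof (Zfloor_bound (d x y)) as [fl_le lt_fl].
  assert (fl_ge0 : (0 <= Zfloor (d x y))%Z)
    by (apply Zfloor_lub; exact (geodesic_dist_ge0 x y)).
  assert (INR_fl : INR (Z.to_nat (Zfloor (d x y))) = IZR (Zfloor (d x y)))
    by (rewrite INR_IZR_INZ, Z2Nat.id; auto).
  assert (d' x y <= INR (Z.to_nat (Zfloor (d x y))) + 1)
    by (apply unit_ball_incl_INR; lra).
  lra.
Qed.

End GeodesicSpace.

Lemma parallel_equivalent_coarse (X : Type) (d d' : X -> X -> R) (c : R) :
  (forall x y, d' x y <= d x y + c) ->
  forall xs ys, parallel_equivalent d xs ys -> parallel_equivalent d' xs ys.
Proof.
  intros coarse xs ys [C [Cxs Cys]]. exists (C + c). split.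
  - intros z. destruct (Cxs z) as [w Hw]. exists w.
    specialize (coarse (xs z) (ys w)). lra.
  - intros w. destruct (Cys w) as [z Hz]. exists z.
    specialize (coarse (xs z) (ys w)). lra.
Qed.

Theorem lemma4 (X : Type) (d d' : X -> X -> R) :
  is_metric d -> locally_compact d -> geodesically_complete d -> CAT0 d ->
  connected_at_infinity d ->
  is_metric d' -> locally_compact d' -> geodesically_complete d' -> CAT0 d' ->
  (forall x y : X, d x y <= 1 <-> d' x y <= 1) ->
  forall (xs ys : Z -> X), r_sequence d xs -> r_sequence d ys ->
  (parallel_equivalent d xs ys <-> parallel_equivalent d' xs ys).
Proof.
  intros [_ [_ [_ tri]]] _ [geod _] _ _ [_ [_ [_ tri']]] _ [geod' _] _ unit_balls
    xs ys _ _.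
  split; apply parallel_equivalent_coarse with (c := 1).
  - apply dist_le_add1; auto. intros x y; apply unit_balls.
  - apply dist_le_add1; auto. intros x y; apply unit_balls.
Qed.
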